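(* Suppose $g$ is polyhedral with parameter $\rho>0$, and Assumptions 1 and 2 below hold. Let $\hat{\boldsymbol\pi}$ be a probability vector on $\mathcal Z$ and $\hat r$ a reward estimate with $\max_k|\hat\pi_k-\pi_k|\le\delta_z\le\epsilon_z$ and $\max_{n,k,\mathbf b}|\hat r_n(\mathbf z_k,\mathbf b)-r_n(\mathbf z_k,\mu_n(\mathbf z_k,\mathbf b))|\le\delta_r\le\epsilon_r$. Let $\boldsymbol\alpha^*$ minimize $g$, $\tilde{\boldsymbol\alpha}^*$ minimize $\tilde g$, and $\hat{\boldsymbol\alpha}^*$ minimize $\hat g^{\hat\pi}$ (each over $\boldsymbol\alpha^d\succeq 0$, $\boldsymbol\alpha^q\in\mathbb R^N$, $\boldsymbol\alpha^h\in\mathbb R^M$). Then there is a constant $\eta\in(0,\eta_0]$ depending only on the system parameters (not on $V$, $\hat\pi$, $\hat r$) such that $$\|\hat{\boldsymbol\alpha}^*-\tilde{\boldsymbol\alpha}^*\|\le\frac{2\delta_z V f_{\max}\vartheta}{\rho},\qquad \|\boldsymbol\alpha^*-\tilde{\boldsymbol\alpha}^*\|\le\frac{2Vf_{\max}\delta_r}{\rho\eta},$$ where $f_{\max}=N\beta r_{\max}+c_{\max}$ and $\vartheta=|\mathcal Z|(1+r_{\max}+A_{\max}+\mu_{\max}+Nb_{\max}+h_{\max})/\eta$.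
   Context: System data. A finite state set $\mathcal Z=\{\mathbf z_1,\dots,\mathbf z_K\}$ with true probabilities $\pi_k$; each $\mathbf z_k$ specifies task arrivals $\mathbf A^k\in[0,A_{\max}]^N$ and resource arrivals $\mathbf e^k\in[0,h_{\max}]^M$. For each $k$, $\mathcal B_k$ is a finite set of nonnegative $M\times N$ matrices $\mathbf b=(b_{mn})$, $b_{\max}$ the largest entry over all $\mathcal B_k$. Service functions $\mu_n(\mathbf z,\mathbf b)\in[0,\mu_{\max}]$, cost $c(\mathbf z,\mathbf b)\in[0,c_{\max}]$, true mean-reward functions $r_n(\mathbf z,\mu)\in[0,r_{\max}]$; utilities $U_n$ increasing concave with $U_n(0)=0$ and $\beta=\max_{n,r}U_n'(r)<\infty$. Parameter $V\ge1$. Write $\boldsymbol\alpha=(\boldsymbol\alpha^d,\boldsymbol\alpha^q,\boldsymbol\alpha^h)\in\mathbb R^N_{\ge0}\times\mathbb R^N\times\mathbb R^M$. Dual functions. For a reward table $\rho_n(\mathbf z_k,\mathbf b)$ (either the true $r_n(\mathbf z_k,\mu_n(\mathbf z_k,\mathbf b))$ or an estimate $\hat r_n(\mathbf z_k,\mathbf b)$), define $g_k(\boldsymbol\alpha)=\sup\{V[\sum_nU_n(\gamma_n)-c(\mathbf z_k,\mathbf b)]-\sum_n\alpha^d_n[\rho_n(\mathbf z_k,\mathbf b)-\gamma_n]-\sum_n\alpha^q_n[R_n-\mu_n(\mathbf z_k,\mathbf b)]-\sum_m\alpha^h_m[\sum_n b_{mn}-h_m]\}$, the sup over $\boldsymbol\gamma\in[0,r_{\max}]^N$,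 $\mathbf 0\preceq\mathbf R\preceq\mathbf A^k$, $\mathbf b\in\mathcal B_k$, $\mathbf 0\preceq\mathbf h\preceq\mathbf e^k$. Then $g=\sum_k\pi_kg_k$ with true rewards; $\tilde g=\sum_k\pi_k g_k$ with estimated rewards $\hat r$; $\hat g^{\hat\pi}=\sum_k\hat\pi_kg_k$ with estimated rewards $\hat r$ and estimated distribution $\hat\pi$. Polyhedral: a dual function $g$ with minimizer $\boldsymbol\alpha^*$ is polyhedral with parameter $\rho>0$ if $g(\boldsymbol\alpha^* )\le g(\boldsymbol\alpha)-\rho\|\boldsymbol\alpha^*-\boldsymbol\alpha\|$ for all feasible $\boldsymbol\alpha$ (Euclidean norm). Assumption 1: there exist constants $\epsilon_r,\epsilon_z,\eta_0>0$ such that for every probability vector $\hat\pi$ and estimate $\hat r$ with $\|\hat\pi-\pi\|\le\epsilon_z$ and $\|\hat r-r\|\le\epsilon_r$ there exist $\boldsymbol\gamma\in[0,r_{\max}]^N$ and, for each $k$, actions $(\mathbf R^k_i,\mathbf b^k_i,\mathbf h^k_i)_{i\ge1}$ with $\mathbf 0\preceq\mathbf R^k_i\preceq\mathbf A^k$, $\mathbf b^k_i\in\mathcal B_k$, $\mathbf 0\preceq\mathbf h^k_i\preceq\mathbf e^k$ and weights $\lambda^k_i\ge0$, $\sum_i\lambda^k_i=1$, such that for all $n,m$: $\gamma_n-\sum_k\hat\pi_k\sum_i\lambda^k_i\hat r_n(\mathbf z_k,\mathbf b^k_i)\le-\eta_0$; $\sum_k\hat\pi_k\sum_i\lambda^k_iR^k_{in}=\sum_k\hat\pi_k\sum_i\lambda^k_i\mu_n(\mathbf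 z_k,\mathbf b^k_i)$; $\sum_k\hat\pi_k\sum_i\lambda^k_i\sum_nb^k_{imn}=\sum_k\hat\pi_k\sum_i\lambda^k_ih^k_{im}$; and $0<\sum_k\hat\pi_k\sum_i\lambda^k_iR^k_{in}<\sum_k\hat\pi_kA^k_n$, $0<\sum_k\hat\pi_k\sum_i\lambda^k_ih^k_{im}<\sum_k\hat\pi_ke^k_m$. Assumption 2: for every such $\hat\pi,\hat r$ (within $\epsilon_z,\epsilon_r$), if $g$ is polyhedral with parameter $\rho$ then $\hat g^{\hat\pi}$ is polyhedral with parameter $\rho$ (this includes $\hat\pi=\pi$, i.e. $\tilde g$). *)

From Stdlib Require Import Reals Lra List ClassicalEpsilon.
Open Scope R_scope.

Fixpoint Rsum (n : nat) (f : nat -> R) : R :=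
  match n with O => 0 | S p => Rsum p f + f p end.

(** Supremum of a set of reals (least upper bound when it is nonempty and
    bounded above; 0 otherwise -- the sets used below are always nonempty
    and bounded under the standing hypotheses). *)
Definition Rsup (E : R -> Prop) : R :=
  match excluded_middle_informative (bound E /\ exists x, E x) with
  | left H => proj1_sig (completeness E (proj1 H) (proj2 H))
  | right _ => 0
  end.

(** An M x N matrix b = (b_{mn}) is represented as  b m n. *)
Definition mat := nat -> nat -> R.

(** System data.  States z_k are indexed by k < K. *)
Record Sys := mkSys {
  Nt : nat;                          (* number of task types *)
  Mr : nat;                          (* number of resource types *)
  Kz : nat;                          (* |Z| *)
  Aarr : nat -> nat -> R;           (* Aarr k n = A^k_n *)
  earr : nat -> nat -> R;           (* earr k m = e^k_m *)
  Bset : nat -> list mat;           (* Bset k = B_k (finite set) *)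
  mu : nat -> nat -> mat -> R;      (* mu n k b = mu_n(z_k, b) *)
  cost : nat -> mat -> R;           (* cost k b = c(z_k, b) *)
  rew : nat -> nat -> R -> R;       (* rew n k x = r_n(z_k, x) *)
  Util : nat -> R -> R;
  piz : nat -> R                    (* piz k = pi_k (true distribution) *)
}.

Definition system_hyps (S : Sys) (Amax hmax bmax mumax cmax rmax beta : R)
    (Util' : nat -> R -> R) : Prop :=
  (forall k, (k < Kz S)%nat -> 0 <= piz S k) /\ Rsum (Kz S) (piz S) = 1 /\
  (forall k n, (k < Kz S)%nat -> (n < Nt S)%nat -> 0 <= Aarr S k n <= Amax) /\
  (forall k m, (k < Kz S)%nat -> (m < Mr S)%nat -> 0 <= earr S k m <= hmax) /\
  (forall k b m n, (k < Kz S)%nat -> In b (Bset S k) -> (m < Mr S)%nat ->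
      (n < Nt S)%nat -> 0 <= b m n <= bmax) /\
  (exists k b m n, (k < Kz S)%nat /\ In b (Bset S k) /\ (m < Mr S)%nat /\
      (n < Nt S)%nat /\ b m n = bmax) /\
  (forall n k b, (n < Nt S)%nat -> (k < Kz S)%nat -> In b (Bset S k) ->
      0 <= mu S n k b <= mumax) /\
  (forall k b, (k < Kz S)%nat -> In b (Bset S k) -> 0 <= cost S k b <= cmax) /\
  (forall n k x, (n < Nt S)%nat -> (k < Kz S)%nat -> 0 <= x <= mumax ->
      0 <= rew S n k x <= rmax) /\
  (forall n, (n < Nt S)%nat ->
      Util S n 0 = 0 /\
      (forall x y, 0 <= x -> x < y -> Util S n x < Util S n y) /\
      (forall x y t, 0 <= x -> 0 <= y -> 0 <= t <= 1 ->
          t * Util S n x + (1 - t) * Util S n y <= Util S n (t * x + (1 - t) * y)) /\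
      (forall x, 0 <= x -> derivable_pt_lim (Util S n) x (Util' n x))) /\
  (forall n x, (n < Nt S)%nat -> 0 <= x <= rmax -> Util' n x <= beta) /\
  (exists n x, (n < Nt S)%nat /\ 0 <= x <= rmax /\ Util' n x = beta).

(** Dual variables alpha = (alpha^d, alpha^q, alpha^h). *)
Record dual := mkDual { ad : nat -> R; aq : nat -> R; ah : nat -> R }.

Definition feasible (S : Sys) (a : dual) : Prop :=
  forall n, (n < Nt S)%nat -> 0 <= ad a n.

Definition dnorm (S : Sys) (a b : dual) : R :=
  sqrt (Rsum (Nt S) (fun n => (ad a n - ad b n) ^ 2)
      + Rsum (Nt S) (fun n => (aq a n - aq b n) ^ 2)
      + Rsum (Mr S) (fun m => (ah a m - ah b m) ^ 2)).

(** Reward tables rho n k b = rho_n(z_k, b). *)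
Definition rtab := nat -> nat -> mat -> R.

Definition rtrue (S : Sys) : rtab := fun n k b => rew S n k (mu S n k b).

Definition gk (S : Sys) (rmax V : R) (rho : rtab) (k : nat) (a : dual) : R :=
  Rsup (fun v => exists (gam Rr h : nat -> R) (b : mat),
     (forall n, (n < Nt S)%nat -> 0 <= gam n <= rmax) /\
     (forall n, (n < Nt S)%nat -> 0 <= Rr n <= Aarr S k n) /\
     In b (Bset S k) /\
     (forall m, (m < Mr S)%nat -> 0 <= h m <= earr S k m) /\
     v = V * (Rsum (Nt S) (fun n => Util S n (gam n)) - cost S k b)
         - Rsum (Nt S) (fun n => ad a n * (rho n k b - gam n))
         - Rsum (Nt S) (fun n => aq a n * (Rr n - mu S n k b))
         - Rsum (Mr S) (fun m => ah a m * (Rsum (Nt S) (fun n => b m n) - h m))).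

(** sum_k p_k g_k : g = gdual pi (rtrue), tilde g = gdual pi rhat,
    hat g^{hat pi} = gdual hatpi rhat. *)
Definition gdual (S : Sys) (rmax V : R) (p : nat -> R) (rho : rtab) (a : dual) : R :=
  Rsum (Kz S) (fun k => p k * gk S rmax V rho k a).

Definition is_minimizer (S : Sys) (g : dual -> R) (a : dual) : Prop :=
  feasible S a /\ forall a', feasible S a' -> g a <= g a'.

Definition polyhedral (S : Sys) (g : dual -> R) (rho : R) : Prop :=
  exists astar, feasible S astar /\
    forall a, feasible S a -> g astar <= g a - rho * dnorm S astar a.

Definition prob_vec (S : Sys) (p : nat -> R) : Prop :=
  (forall k, (k < Kz S)%nat -> 0 <= p k) /\ Rsum (Kz S) p = 1.

Definition pi_close (S : Sys) (p q : nat -> R) (eps : R) : Prop :=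
  forall k, (k < Kz S)%nat -> Rabs (p k - q k) <= eps.

Definition r_close (S : Sys) (rh rt : rtab) (eps : R) : Prop :=
  forall n k b, (n < Nt S)%nat -> (k < Kz S)%nat -> In b (Bset S k) ->
    Rabs (rh n k b - rt n k b) <= eps.

Definition wavg (S : Sys) (ph : nat -> R) (L : nat -> nat) (lam : nat -> nat -> R)
    (f : nat -> nat -> R) : R :=
  Rsum (Kz S) (fun k => ph k * Rsum (L k) (fun i => lam k i * f k i)).

Definition Assumption1 (S : Sys) (rmax er ez eta0 : R) : Prop :=
  forall (ph : nat -> R) (rh : rtab),
    prob_vec S ph -> pi_close S ph (piz S) ez -> r_close S rh (rtrue S) er ->
    exists (gam : nat -> R) (L : nat -> nat) (Rr : nat -> nat -> nat -> R)
           (bb : nat -> nat -> mat) (hh : nat -> nat -> nat -> R)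
           (lam : nat -> nat -> R),
      (forall n, (n < Nt S)%nat -> 0 <= gam n <= rmax) /\
      (forall k, (k < Kz S)%nat ->
         Rsum (L k) (lam k) = 1 /\
         forall i, (i < L k)%nat ->
           0 <= lam k i /\ In (bb k i) (Bset S k) /\
           (forall n, (n < Nt S)%nat -> 0 <= Rr k i n <= Aarr S k n) /\
           (forall m, (m < Mr S)%nat -> 0 <= hh k i m <= earr S k m)) /\
      (forall n, (n < Nt S)%nat ->
         gam n - wavg S ph L lam (fun k i => rh n k (bb k i)) <= - eta0 /\
         wavg S ph L lam (fun k i => Rr k i n)
           = wavg S ph L lam (fun k i => mu S n k (bb k i)) /\
         0 < wavg S ph L lam (fun k i => Rr k i n) /\
         wavg S ph L lam (fun k i => Rr k i n)
           < Rsum (Kz S) (fun k => ph k * Aarr S k n)) /\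
      (forall m, (m < Mr S)%nat ->
         wavg S ph L lam (fun k i => Rsum (Nt S) (fun n => bb k i m n))
           = wavg S ph L lam (fun k i => hh k i m) /\
         0 < wavg S ph L lam (fun k i => hh k i m) /\
         wavg S ph L lam (fun k i => hh k i m)
           < Rsum (Kz S) (fun k => ph k * earr S k m)).

Definition Assumption2 (S : Sys) (rmax V er ez rho : R) : Prop :=
  forall (ph : nat -> R) (rh : rtab),
    prob_vec S ph -> pi_close S ph (piz S) ez -> r_close S rh (rtrue S) er ->
    polyhedral S (gdual S rmax V (piz S) (rtrue S)) rho ->
    polyhedral S (gdual S rmax V ph rh) rho.

From Stdlib Require Import Reals Lra Lia List Classical FunctionalExtensionality ClassicalEpsilon.
Open Scope R_scope.

(* The dual functions are jointly positively homogeneous: g_{cV}(c alpha) = c g_V(alpha) for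
   c > 0.  So if g is polyhedral with parameter rho0 at some V0, Assumption 2 and rescaling make
   every dual function within (ez, er) of g polyhedral with the same rho0 at every V, and
   sharpness together with g_V(0) <= V f_max bounds the norm of each of their minimizers by
   O(V f_max / rho0).  Minimizers a, b that are rho-sharp for g1, g2 satisfy
   2 rho |a - b| <= (g1 - g2)(b) + (g2 - g1)(a); perturbing pi by dz changes g by at most
   dz sum_k |g_k|, perturbing the rewards by dr changes it by at most dr sum_n alpha^d_n, and both
   are O(V f_max) at the minimizers.  This gives the estimates with eta = min(eta0, 2 / kappa),
   kappa depending only on rho0 and the system constants; if g is never polyhedral the statement
   is vacuous.  Assumption 1 is used only to know that every B_k is nonempty. *)

Lemma Rsum_ext n f g : (forall i, (i < n)%nat -> f i = g i) -> Rsum n f = Rsum n g.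
Proof.
  induction n as [|n IHn]; simpl; intros Hfg; auto.
  rewrite IHn by (intros; apply Hfg; lia). now rewrite Hfg by lia.
Qed.

Lemma Rsum_plus n f g : Rsum n (fun i => f i + g i) = Rsum n f + Rsum n g.
Proof. induction n as [|n IHn]; simpl; [lra | rewrite IHn; lra]. Qed.

Lemma Rsum_minus n f g : Rsum n (fun i => f i - g i) = Rsum n f - Rsum n g.
Proof. induction n as [|n IHn]; simpl; [lra | rewrite IHn; lra]. Qed.

Lemma Rsum_mult_l n c f : Rsum n (fun i => c * f i) = c * Rsum n f.
Proof. induction n as [|n IHn]; simpl; [lra | rewrite IHn; lra]. Qed.

Lemma Rsum_const n c : Rsum n (fun _ => c) = INR n * c.
Proof. induction n as [|n IHn]; cbn [Rsum]; [simpl; lra | rewrite IHn, S_INR; lra]. Qed.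

Lemma Rsum_le n f g : (forall i, (i < n)%nat -> f i <= g i) -> Rsum n f <= Rsum n g.
Proof.
  induction n as [|n IHn]; simpl; intros Hfg; [lra|].
  assert (f n <= g n) by (apply Hfg; lia).
  assert (Rsum n f <= Rsum n g) by (apply IHn; intros; apply Hfg; lia).
  lra.
Qed.

Lemma Rsum_nonneg n f : (forall i, (i < n)%nat -> 0 <= f i) -> 0 <= Rsum n f.
Proof.
  intros Hf. replace 0 with (Rsum n (fun _ => 0)) by (rewrite Rsum_const; ring).
  now apply Rsum_le.
Qed.

Lemma Rsum_term_le n f i :
  (forall j, (j < n)%nat -> 0 <= f j) -> (i < n)%nat -> f i <= Rsum n f.
Proof.
  induction n as [|n IHn]; simpl; intros Hf Hi; [lia|].
  assert (0 <= Rsum n f) by (apply Rsum_nonneg; intros; apply Hf; lia).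
  assert (0 <= f n) by (apply Hf; lia).
  destruct (Nat.eq_dec i n) as [->|Hin]; [lra|].
  assert (f i <= Rsum n f) by (apply IHn; [intros; apply Hf | ]; lia).
  lra.
Qed.

Lemma Rle_div_of_mul x y z : 0 < z -> y * z <= x -> y <= x / z.
Proof.
  intros Hz Hyz. apply (Rmult_le_reg_r z); auto.
  unfold Rdiv. rewrite Rmult_assoc, Rinv_l by lra. lra.
Qed.

Lemma Rle_0_of_linear_bound x c : (forall t, 1 < t -> (t - 1) * x <= c) -> x <= 0.
Proof.
  intros Hgrowth. destruct (Rle_or_lt x 0) as [|Hx]; auto.
  specialize (Hgrowth (1 + (Rabs c + 1) / x)).
  assert (0 < (Rabs c + 1) / x) by (apply Rdiv_lt_0_compat; [pose proof (Rabs_pos c) |]; lra).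
  replace ((1 + (Rabs c + 1) / x - 1) * x) with (Rabs c + 1) in Hgrowth by (field; lra).
  pose proof (Rle_abs c). lra.
Qed.

Lemma Rle_div_of_scaled d rho eta kappa y x :
  0 < rho -> 0 < eta -> 0 < kappa -> eta <= 2 / kappa -> 0 <= x ->
  rho * d <= y * kappa -> y <= x -> d <= 2 * x / (rho * eta).
Proof.
  intros Hrho Heta Hk Hek Hx Hd Hyx.
  assert (eta * kappa <= 2).
  { apply (Rmult_le_compat_r kappa) in Hek; [|lra].
    replace (2 / kappa * kappa) with 2 in Hek by (field; lra). exact Hek. }
  apply Rle_div_of_mul; [nra|].
  assert (y * kappa <= x * kappa) by nra. nra.
Qed.

Lemma Rabs_le_bounds x c : Rabs x <= c -> - c <= x <= c.
Proof. unfold Rabs; destruct Rcase_abs; lra. Qed.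

Lemma Rabs_Rsum_le n f : Rabs (Rsum n f) <= Rsum n (fun i => Rabs (f i)).
Proof.
  induction n as [|n IHn]; simpl; [rewrite Rabs_R0; lra|].
  eapply Rle_trans; [apply Rabs_triang | lra].
Qed.

Lemma Rabs_Rsum_mult_le n (a y : nat -> R) c :
  (forall i, (i < n)%nat -> Rabs (y i) <= c) ->
  Rabs (Rsum n (fun i => a i * y i)) <= c * Rsum n (fun i => Rabs (a i)).
Proof.
  intros Hy. eapply Rle_trans; [apply Rabs_Rsum_le|].
  rewrite <- Rsum_mult_l. apply Rsum_le. intros i Hi.
  rewrite Rabs_mult. specialize (Hy i Hi). pose proof (Rabs_pos (a i)). nra.
Qed.

Lemma Rsum_mean_le n p f g c :
  (forall i, (i < n)%nat -> 0 <= p i) -> Rsum n p = 1 ->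
  (forall i, (i < n)%nat -> f i <= g i + c) ->
  Rsum n (fun i => p i * f i) <= Rsum n (fun i => p i * g i) + c.
Proof.
  intros Hp Hp1 Hfg.
  replace c with (Rsum n (fun i => p i * c))
    by (rewrite (Rsum_ext _ _ (fun i => c * p i)) by (intros; ring);
        rewrite Rsum_mult_l, Hp1; ring).
  rewrite <- Rsum_plus. apply Rsum_le. intros i Hi.
  specialize (Hfg i Hi). specialize (Hp i Hi). nra.
Qed.

Lemma Rsup_ub (E : R -> Prop) x : bound E -> E x -> x <= Rsup E.
Proof.
  intros Hb Hx. unfold Rsup. destruct excluded_middle_informative as [H|H].
  - destruct (completeness E _ _) as [s Hs]; simpl. now apply (proj1 Hs).
  - exfalso; apply H; eauto.
Qed.

Lemma Rsup_lub (E : R -> Prop) c :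
  (exists x, E x) -> (forall x, E x -> x <= c) -> Rsup E <= c.
Proof.
  intros He Hc. unfold Rsup. destruct excluded_middle_informative as [H|H].
  - destruct (completeness E _ _) as [s Hs]; simpl. now apply (proj2 Hs).
  - exfalso; apply H; split; [exists c|]; auto.
Qed.

Definition dscale (c : R) (a : dual) : dual :=
  mkDual (fun n => c * ad a n) (fun n => c * aq a n) (fun m => c * ah a m).

Definition dzero : dual := mkDual (fun _ => 0) (fun _ => 0) (fun _ => 0).

Definition dnorm1 (S : Sys) (a : dual) : R :=
  Rsum (Nt S) (fun n => Rabs (ad a n)) + Rsum (Nt S) (fun n => Rabs (aq a n))
  + Rsum (Mr S) (fun m => Rabs (ah a m)).

Definition dual_dim (S : Sys) : R := 2 * INR (Nt S) + INR (Mr S).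

Definition sharp_minimizer (S : Sys) (g : dual -> R) (rho : R) (a : dual) : Prop :=
  feasible S a /\ forall x, feasible S x -> g a + rho * dnorm S a x <= g x.

Lemma dscale_cancel c s a : c * s = 1 -> dscale c (dscale s a) = a.
Proof.
  intros Hcs. destruct a as [f g h]. unfold dscale; simpl.
  f_equal; apply functional_extensionality; intros x; rewrite <- Rmult_assoc, Hcs; ring.
Qed.

Lemma feasible_dscale S c a : 0 <= c -> feasible S a -> feasible S (dscale c a).
Proof. unfold feasible, dscale; simpl; intros Hc Ha n Hn. specialize (Ha n Hn). nra. Qed.

Lemma feasible_dzero S : feasible S dzero.
Proof. unfold feasible, dzero; simpl; intros; lra. Qed.

Lemma dnorm_nonneg S a b : 0 <= dnorm S a b.
Proof. apply sqrt_pos. Qed.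

Lemma dnorm_scale_diff S x y x' y' c :
  (forall n, (n < Nt S)%nat -> ad x n - ad y n = c * (ad x' n - ad y' n)) ->
  (forall n, (n < Nt S)%nat -> aq x n - aq y n = c * (aq x' n - aq y' n)) ->
  (forall m, (m < Mr S)%nat -> ah x m - ah y m = c * (ah x' m - ah y' m)) ->
  dnorm S x y = Rabs c * dnorm S x' y'.
Proof.
  intros Hd Hq Hh. unfold dnorm.
  rewrite (Rsum_ext (Nt S) (fun n => (ad x n - ad y n) ^ 2)
             (fun n => Rsqr c * (ad x' n - ad y' n) ^ 2))
    by (intros n Hn; rewrite Hd by auto; unfold Rsqr; ring).
  rewrite (Rsum_ext (Nt S) (fun n => (aq x n - aq y n) ^ 2)
             (fun n => Rsqr c * (aq x' n - aq y' n) ^ 2))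
    by (intros n Hn; rewrite Hq by auto; unfold Rsqr; ring).
  rewrite (Rsum_ext (Mr S) (fun m => (ah x m - ah y m) ^ 2)
             (fun m => Rsqr c * (ah x' m - ah y' m) ^ 2))
    by (intros m Hm; rewrite Hh by auto; unfold Rsqr; ring).
  rewrite !Rsum_mult_l, <- !Rmult_plus_distr_l.
  rewrite sqrt_mult_alt by apply Rle_0_sqr. now rewrite sqrt_Rsqr_abs.
Qed.

Lemma dnorm_sym S a b : dnorm S a b = dnorm S b a.
Proof.
  rewrite (dnorm_scale_diff S a b b a (-1)) by (intros; ring).
  rewrite Rabs_left by lra. ring.
Qed.

Lemma dnorm_ge_component S x y :
  (forall n, (n < Nt S)%nat -> Rabs (ad x n - ad y n) <= dnorm S x y) /\
  (forall n, (n < Nt S)%nat -> Rabs (aq x n - aq y n) <= dnorm S x y) /\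
  (forall m, (m < Mr S)%nat -> Rabs (ah x m - ah y m) <= dnorm S x y).
Proof.
  assert (Hsq : forall n (f : nat -> R), 0 <= Rsum n (fun i => f i ^ 2))
    by (intros; apply Rsum_nonneg; intros; apply pow2_ge_0).
  assert (Hterm : forall n (f : nat -> R) i, (i < n)%nat -> f i ^ 2 <= Rsum n (fun j => f j ^ 2))
    by (intros n f i Hi; apply (Rsum_term_le n (fun j => f j ^ 2)); auto; intros; apply pow2_ge_0).
  assert (Hsqrt : forall z T, z ^ 2 <= T -> Rabs z <= sqrt T)
    by (intros z T Hz; rewrite <- sqrt_Rsqr_abs; apply sqrt_le_1_alt; unfold Rsqr; lra).
  pose proof (Hsq (Nt S) (fun n => ad x n - ad y n)).
  pose proof (Hsq (Nt S) (fun n => aq x n - aq y n)).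
  pose proof (Hsq (Mr S) (fun m => ah x m - ah y m)).
  unfold dnorm. repeat split; intros i Hi; apply Hsqrt.
  - pose proof (Hterm _ (fun n => ad x n - ad y n) i Hi); simpl in *; lra.
  - pose proof (Hterm _ (fun n => aq x n - aq y n) i Hi); simpl in *; lra.
  - pose proof (Hterm _ (fun m => ah x m - ah y m) i Hi); simpl in *; lra.
Qed.

Lemma dnorm_eq0_left S x x' y : dnorm S x x' = 0 -> dnorm S x y = dnorm S x' y.
Proof.
  intros H0. destruct (dnorm_ge_component S x x') as (Hd & Hq & Hh).
  rewrite H0 in Hd, Hq, Hh.
  assert (Hz : forall z, Rabs z <= 0 -> z = 0)
    by (intros z Hz; destruct (Req_dec z 0) as [|Hne];
        [auto | pose proof (Rabs_pos_lt z Hne); lra]).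
  unfold dnorm. f_equal. f_equal; [f_equal|]; apply Rsum_ext; intros i Hi.
  - now rewrite <- (Rminus_diag_uniq _ _ (Hz _ (Hd i Hi))).
  - now rewrite <- (Rminus_diag_uniq _ _ (Hz _ (Hq i Hi))).
  - now rewrite <- (Rminus_diag_uniq _ _ (Hz _ (Hh i Hi))).
Qed.

Lemma dual_dim_nonneg S : 0 <= dual_dim S.
Proof. unfold dual_dim. pose proof (pos_INR (Nt S)). pose proof (pos_INR (Mr S)). lra. Qed.

Lemma dnorm1_le S a : dnorm1 S a <= dual_dim S * dnorm S a dzero.
Proof.
  destruct (dnorm_ge_component S a dzero) as (Hd & Hq & Hh).
  assert (Rsum (Nt S) (fun n => Rabs (ad a n)) <= Rsum (Nt S) (fun _ => dnorm S a dzero))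
    by (apply Rsum_le; intros n Hn;
        replace (ad a n) with (ad a n - ad dzero n) by (simpl; ring); auto).
  assert (Rsum (Nt S) (fun n => Rabs (aq a n)) <= Rsum (Nt S) (fun _ => dnorm S a dzero))
    by (apply Rsum_le; intros n Hn;
        replace (aq a n) with (aq a n - aq dzero n) by (simpl; ring); auto).
  assert (Rsum (Mr S) (fun m => Rabs (ah a m)) <= Rsum (Mr S) (fun _ => dnorm S a dzero))
    by (apply Rsum_le; intros m Hm;
        replace (ah a m) with (ah a m - ah dzero m) by (simpl; ring); auto).
  rewrite !Rsum_const in *. unfold dnorm1, dual_dim. lra.
Qed.

Lemma Rsum_ad_le_dnorm1 S a : feasible S a -> Rsum (Nt S) (fun n => ad a n) <= dnorm1 S a.
Proof.
  intros Ha. unfold dnorm1.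
  rewrite (Rsum_ext _ _ (fun n => Rabs (ad a n))) by (intros; rewrite Rabs_pos_eq; auto).
  assert (0 <= Rsum (Nt S) (fun n => Rabs (aq a n))) by (apply Rsum_nonneg; intros; apply Rabs_pos).
  assert (0 <= Rsum (Mr S) (fun m => Rabs (ah a m))) by (apply Rsum_nonneg; intros; apply Rabs_pos).
  lra.
Qed.

(* Polyhedrality is stated for one minimizer; every other minimizer is at distance 0 from it. *)
Lemma polyhedral_sharp_minimizer S g rho a :
  0 < rho -> polyhedral S g rho -> is_minimizer S g a -> sharp_minimizer S g rho a.
Proof.
  intros Hrho [a0 [Ha0 Hsharp]] [Ha Hmin]. split; auto.
  assert (Hdist : dnorm S a a0 = 0).
  { pose proof (Hsharp a Ha). pose proof (Hmin a0 Ha0). pose proof (dnorm_nonneg S a0 a).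
    rewrite dnorm_sym. nra. }
  intros x Hx. rewrite (dnorm_eq0_left S a a0 x Hdist).
  pose proof (Hsharp x Hx). pose proof (Hmin a0 Ha0). lra.
Qed.

Lemma sharp_minimizers_close S g1 g2 rho a1 a2 :
  sharp_minimizer S g1 rho a1 -> sharp_minimizer S g2 rho a2 ->
  2 * rho * dnorm S a1 a2 <= (g1 a2 - g2 a2) + (g2 a1 - g1 a1).
Proof.
  intros [Ha1 H1] [Ha2 H2].
  pose proof (H1 a2 Ha2). pose proof (H2 a1 Ha1). rewrite (dnorm_sym S a2 a1) in *. lra.
Qed.

(* [gk] is the supremum of [lagrangian] over [admissible] arguments. *)
Definition lagrangian (S : Sys) (V : R) (rho : rtab) (k : nat) (a : dual)
    (gam Rr h : nat -> R) (b : mat) : R :=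
  V * (Rsum (Nt S) (fun n => Util S n (gam n)) - cost S k b)
  - Rsum (Nt S) (fun n => ad a n * (rho n k b - gam n))
  - Rsum (Nt S) (fun n => aq a n * (Rr n - mu S n k b))
  - Rsum (Mr S) (fun m => ah a m * (Rsum (Nt S) (fun n => b m n) - h m)).

Definition admissible (S : Sys) (rmax : R) (k : nat) (gam Rr h : nat -> R) (b : mat) : Prop :=
  (forall n, (n < Nt S)%nat -> 0 <= gam n <= rmax) /\
  (forall n, (n < Nt S)%nat -> 0 <= Rr n <= Aarr S k n) /\
  In b (Bset S k) /\
  (forall m, (m < Mr S)%nat -> 0 <= h m <= earr S k m).

Definition table_bounded (S : Sys) (B : R) (rho : rtab) : Prop :=
  forall n k b, (n < Nt S)%nat -> (k < Kz S)%nat -> In b (Bset S k) -> Rabs (rho n k b) <= B.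

Definition util_max (S : Sys) (rmax : R) : R := Rsum (Nt S) (fun n => Util S n rmax).

Definition obj_range (S : Sys) (rmax cmax : R) : R := util_max S rmax + cmax.

Definition mult_bound (S : Sys) (Amax hmax bmax mumax rmax B : R) : R :=
  rmax + B + Amax + mumax + INR (Nt S) * bmax + hmax.

Definition sharpness_factor (S : Sys) (Amax hmax bmax mumax rmax B rho0 : R) : R :=
  1 + (1 + mult_bound S Amax hmax bmax mumax rmax B) * dual_dim S / (2 * rho0).

Lemma lagrangian_dscale S V rho k a c gam Rr h b :
  lagrangian S (c * V) rho k (dscale c a) gam Rr h b = c * lagrangian S V rho k a gam Rr h b.
Proof.
  unfold lagrangian, dscale; simpl.
  rewrite (Rsum_ext (Nt S) (fun n => c * ad a n * (rho n k b - gam n))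
             (fun n => c * (ad a n * (rho n k b - gam n)))) by (intros; ring).
  rewrite (Rsum_ext (Nt S) (fun n => c * aq a n * (Rr n - mu S n k b))
             (fun n => c * (aq a n * (Rr n - mu S n k b)))) by (intros; ring).
  rewrite (Rsum_ext (Mr S) (fun m => c * ah a m * (Rsum (Nt S) (fun n => b m n) - h m))
             (fun m => c * (ah a m * (Rsum (Nt S) (fun n => b m n) - h m)))) by (intros; ring).
  rewrite !Rsum_mult_l. ring.
Qed.

Lemma lagrangian_split_V S V rho k a gam Rr h b :
  lagrangian S V rho k a gam Rr h b
  = lagrangian S 0 rho k a gam Rr h b + V * (Rsum (Nt S) (fun n => Util S n (gam n)) - cost S k b).
Proof. unfold lagrangian. ring. Qed.

Lemma lagrangian0_dzero S rho k gam Rr h b : lagrangian S 0 rho k dzero gam Rr h b = 0.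
Proof.
  unfold lagrangian, dzero; simpl. rewrite !Rsum_mult_l. ring.
Qed.

Section DualFunction.

Context {S : Sys} {Amax hmax bmax mumax cmax rmax beta : R} {Util' : nat -> R -> R}.
Hypothesis Hsys : system_hyps S Amax hmax bmax mumax cmax rmax beta Util'.

Lemma system_consts_nonneg :
  0 <= Amax /\ 0 <= hmax /\ 0 <= bmax /\ 0 <= mumax /\ 0 <= cmax /\ 0 <= rmax.
Proof.
  destruct Hsys as (_ & _ & HA & He & Hb & Hbmax & Hmu & Hc & _ & _ & _ & Hbeta).
  destruct Hbmax as (k & b & m & n & Hk & Hbk & Hm & Hn & _).
  destruct Hbeta as (_ & x & _ & Hx & _).
  specialize (HA k n Hk Hn). specialize (He k m Hk Hm). specialize (Hb k b m n Hk Hbk Hm Hn).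
  specialize (Hmu n k b Hn Hk Hbk). specialize (Hc k b Hk Hbk).
  repeat split; lra.
Qed.

Lemma mult_bound_nonneg B : 0 <= B -> 0 <= mult_bound S Amax hmax bmax mumax rmax B.
Proof.
  intros HB0. pose proof system_consts_nonneg as (HAm & Hhm & Hbm & Hmum & _ & Hrm).
  pose proof (pos_INR (Nt S)). unfold mult_bound. nra.
Qed.

Lemma sharpness_factor_ge1 B rho0 :
  0 <= B -> 0 < rho0 -> 1 <= sharpness_factor S Amax hmax bmax mumax rmax B rho0.
Proof.
  intros HB0 Hrho0. pose proof (mult_bound_nonneg B HB0). pose proof (dual_dim_nonneg S).
  assert (0 <= (1 + mult_bound S Amax hmax bmax mumax rmax B) * dual_dim S / (2 * rho0))
    by (apply Rle_div_of_mul; nra).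
  unfold sharpness_factor. lra.
Qed.

Lemma table_bounded_nonneg B rho : table_bounded S B rho -> 0 <= B.
Proof.
  intros Hrho. destruct Hsys as (_ & _ & _ & _ & _ & Hbmax & _).
  destruct Hbmax as (k & b & _ & n & Hk & Hbk & _ & Hn & _).
  pose proof (Hrho n k b Hn Hk Hbk). pose proof (Rabs_pos (rho n k b)). lra.
Qed.

Lemma Util_bounds n x : (n < Nt S)%nat -> 0 <= x <= rmax -> 0 <= Util S n x <= Util S n rmax.
Proof.
  intros Hn Hx. destruct Hsys as (_ & _ & _ & _ & _ & _ & _ & _ & _ & HU & _).
  destruct (HU n Hn) as (HU0 & Hinc & _).
  split.
  - destruct (Req_dec x 0) as [->|]; [lra|].
    assert (Util S n 0 < Util S n x) by (apply Hinc; lra). lra.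
  - destruct (Req_dec x rmax) as [->|]; [lra|].
    assert (Util S n x < Util S n rmax) by (apply Hinc; lra). lra.
Qed.

Lemma util_max_nonneg : 0 <= util_max S rmax.
Proof.
  apply Rsum_nonneg. intros n Hn. apply (Util_bounds n rmax Hn).
  pose proof system_consts_nonneg. lra.
Qed.

Lemma obj_range_nonneg : 0 <= obj_range S rmax cmax.
Proof. pose proof util_max_nonneg. pose proof system_consts_nonneg. unfold obj_range. lra. Qed.

(* Mean value theorem on [0, rmax], using U_n(0) = 0 and U_n' <= beta. *)
Lemma util_max_le : util_max S rmax <= INR (Nt S) * beta * rmax.
Proof.
  destruct Hsys as (_ & _ & _ & _ & _ & _ & _ & _ & _ & HU & HU' & _).
  assert (Hrmax : 0 <= rmax) by apply system_consts_nonneg.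
  unfold util_max. rewrite Rmult_assoc, <- Rsum_const. apply Rsum_le. intros n Hn.
  destruct (HU n Hn) as (HU0 & _ & _ & Hderiv).
  destruct (Req_dec rmax 0) as [->|]; [rewrite HU0; lra|].
  destruct (MVT_cor2 (Util S n) (Util' n) 0 rmax) as (c & Hc & Hcrange);
    [lra | intros c Hc; apply Hderiv; lra |].
  rewrite HU0 in Hc. assert (Util' n c <= beta) by (apply HU'; auto; lra). nra.
Qed.

Lemma admissible_zero k b :
  (k < Kz S)%nat -> In b (Bset S k) -> admissible S rmax k (fun _ => 0) (fun _ => 0) (fun _ => 0) b.
Proof.
  intros Hk Hb. destruct Hsys as (_ & _ & HA & He & _).
  pose proof system_consts_nonneg.
  repeat split; auto; try lra.
  - now apply HA.
  - now apply He.
Qed.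

Lemma lagrangian_bounds V B rho k a gam Rr h b :
  0 <= V -> table_bounded S B rho -> (k < Kz S)%nat -> admissible S rmax k gam Rr h b ->
  - V * cmax - mult_bound S Amax hmax bmax mumax rmax B * dnorm1 S a
    <= lagrangian S V rho k a gam Rr h b
    <= V * util_max S rmax + mult_bound S Amax hmax bmax mumax rmax B * dnorm1 S a.
Proof.
  intros HV Hrho Hk (Hgam & HR & Hb & Hh).
  pose proof system_consts_nonneg as (HAm & Hhm & Hbm & Hmum & Hcm & Hrm).
  pose proof (table_bounded_nonneg B rho Hrho) as HB0.
  pose proof (pos_INR (Nt S)) as HN.
  destruct Hsys as (_ & _ & HA & He & Hbb & _ & Hmu & Hc & _).
  set (C := mult_bound S Amax hmax bmax mumax rmax B).
  assert (HU : 0 <= Rsum (Nt S) (fun n => Util S n (gam n)) <= util_max S rmax)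
    by (split; [apply Rsum_nonneg | apply Rsum_le]; intros n Hn; apply Util_bounds; auto).
  specialize (Hc k b Hk Hb).
  assert (Td : Rabs (Rsum (Nt S) (fun n => ad a n * (rho n k b - gam n)))
               <= C * Rsum (Nt S) (fun n => Rabs (ad a n))).
  { apply Rabs_Rsum_mult_le. intros n Hn.
    pose proof (Hrho n k b Hn Hk Hb) as Hr. specialize (Hgam n Hn).
    apply Rabs_le. apply Rabs_le_bounds in Hr. unfold C, mult_bound. nra. }
  assert (Tq : Rabs (Rsum (Nt S) (fun n => aq a n * (Rr n - mu S n k b)))
               <= C * Rsum (Nt S) (fun n => Rabs (aq a n))).
  { apply Rabs_Rsum_mult_le. intros n Hn.
    specialize (HR n Hn). specialize (HA k n Hk Hn). specialize (Hmu n k b Hn Hk Hb).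
    apply Rabs_le. unfold C, mult_bound. nra. }
  assert (Th : Rabs (Rsum (Mr S) (fun m => ah a m * (Rsum (Nt S) (fun n => b m n) - h m)))
               <= C * Rsum (Mr S) (fun m => Rabs (ah a m))).
  { apply Rabs_Rsum_mult_le. intros m Hm.
    specialize (Hh m Hm). specialize (He k m Hk Hm).
    assert (Hrow : 0 <= Rsum (Nt S) (fun n => b m n) <= Rsum (Nt S) (fun _ => bmax))
      by (split; [apply Rsum_nonneg | apply Rsum_le]; intros n Hn; apply (Hbb k b m n); auto).
    rewrite Rsum_const in Hrow.
    apply Rabs_le. unfold C, mult_bound. nra. }
  apply Rabs_le_bounds in Td. apply Rabs_le_bounds in Tq. apply Rabs_le_bounds in Th.
  unfold lagrangian, dnorm1. fold C. nra.
Qed.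

Lemma Bset_nonempty_of_Assumption1 er ez eta0 :
  0 <= er -> 0 <= ez -> Assumption1 S rmax er ez eta0 ->
  forall k, (k < Kz S)%nat -> exists b, In b (Bset S k).
Proof.
  intros Her Hez HA1 k Hk. destruct Hsys as (Hpi0 & Hpi1 & _).
  destruct (HA1 (piz S) (rtrue S)) as (gam & L & Rr & bb & hh & lam & _ & HL & _).
  - split; auto.
  - intros j _. rewrite Rminus_diag, Rabs_R0. lra.
  - intros n j b _ _ _. rewrite Rminus_diag, Rabs_R0. lra.
  - destruct (HL k Hk) as [Hlam1 Hbb]. destruct (L k) as [|l] eqn:HLk.
    + simpl in Hlam1. lra.
    + exists (bb k 0%nat). apply Hbb. lia.
Qed.

Lemma table_bounded_of_r_close rh d : r_close S rh (rtrue S) d -> table_bounded S (rmax + d) rh.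
Proof.
  intros Hclose n k b Hn Hk Hb.
  destruct Hsys as (_ & _ & _ & _ & _ & _ & Hmu & _ & Hrew & _).
  pose proof (Hrew n k (mu S n k b) Hn Hk (Hmu n k b Hn Hk Hb)) as Hr.
  specialize (Hclose n k b Hn Hk Hb). unfold rtrue in *.
  replace (rh n k b) with (rew S n k (mu S n k b) + (rh n k b - rew S n k (mu S n k b))) by ring.
  eapply Rle_trans; [apply Rabs_triang|]. rewrite (Rabs_pos_eq (rew _ _ _ _)); lra.
Qed.

Lemma pi_close_nonneg p q dz : pi_close S p q dz -> 0 <= dz.
Proof.
  intros Hpq. destruct Hsys as (_ & _ & _ & _ & _ & (k & _ & _ & _ & Hk & _) & _).
  pose proof (Hpq k Hk). pose proof (Rabs_pos (p k - q k)). lra.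
Qed.

Hypothesis HB : forall k, (k < Kz S)%nat -> exists b, In b (Bset S k).

Lemma r_close_nonneg r1 r2 d : r_close S r1 r2 d -> 0 <= d.
Proof.
  intros Hr. destruct Hsys as (_ & _ & _ & _ & _ & (k & _ & _ & n & Hk & _ & _ & Hn & _) & _).
  destruct (HB k Hk) as [b Hb].
  pose proof (Hr n k b Hn Hk Hb). pose proof (Rabs_pos (r1 n k b - r2 n k b)). lra.
Qed.

Lemma gk_ge_lagrangian V B rho k a gam Rr h b :
  0 <= V -> table_bounded S B rho -> (k < Kz S)%nat -> admissible S rmax k gam Rr h b ->
  lagrangian S V rho k a gam Rr h b <= gk S rmax V rho k a.
Proof.
  intros HV Hrho Hk Hadm. apply Rsup_ub.
  - exists (V * util_max S rmax + mult_bound S Amax hmax bmax mumax rmax B * dnorm1 S a).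
    intros v (gam' & Rr' & h' & b' & H1 & H2 & H3 & H4 & ->).
    exact (proj2 (lagrangian_bounds V B rho k a gam' Rr' h' b' HV Hrho Hk
                    (conj H1 (conj H2 (conj H3 H4))))).
  - destruct Hadm as (H1 & H2 & H3 & H4).
    exists gam, Rr, h, b. exact (conj H1 (conj H2 (conj H3 (conj H4 eq_refl)))).
Qed.

Lemma gk_le V rho k a c :
  (k < Kz S)%nat ->
  (forall gam Rr h b, admissible S rmax k gam Rr h b -> lagrangian S V rho k a gam Rr h b <= c) ->
  gk S rmax V rho k a <= c.
Proof.
  intros Hk Hc. apply Rsup_lub.
  - destruct (HB k Hk) as [b Hb].
    destruct (admissible_zero k b Hk Hb) as (H1 & H2 & H3 & H4).
    eexists. exists (fun _ => 0), (fun _ => 0), (fun _ => 0), b.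
    exact (conj H1 (conj H2 (conj H3 (conj H4 eq_refl)))).
  - intros v (gam & Rr & h & b & H1 & H2 & H3 & H4 & ->).
    exact (Hc gam Rr h b (conj H1 (conj H2 (conj H3 H4)))).
Qed.

Lemma Rabs_gk_le V B rho k a :
  0 <= V -> table_bounded S B rho -> (k < Kz S)%nat ->
  Rabs (gk S rmax V rho k a)
  <= V * obj_range S rmax cmax + mult_bound S Amax hmax bmax mumax rmax B * dnorm1 S a.
Proof.
  intros HV Hrho Hk.
  pose proof util_max_nonneg. pose proof system_consts_nonneg as (_ & _ & _ & _ & Hcm & _).
  destruct (HB k Hk) as [b0 Hb0].
  pose proof (admissible_zero k b0 Hk Hb0) as Hadm0.
  pose proof (gk_ge_lagrangian V B rho k a _ _ _ _ HV Hrho Hk Hadm0).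
  pose proof (lagrangian_bounds V B rho k a _ _ _ _ HV Hrho Hk Hadm0).
  assert (gk S rmax V rho k a
          <= V * util_max S rmax + mult_bound S Amax hmax bmax mumax rmax B * dnorm1 S a)
    by (apply gk_le; auto; intros; now apply (lagrangian_bounds V B rho k a)).
  apply Rabs_le. unfold obj_range. nra.
Qed.

Lemma gk_table_diff V B rho1 rho2 k a d :
  0 <= V -> table_bounded S B rho2 -> (k < Kz S)%nat -> feasible S a ->
  (forall n b, (n < Nt S)%nat -> In b (Bset S k) -> Rabs (rho1 n k b - rho2 n k b) <= d) ->
  gk S rmax V rho1 k a <= gk S rmax V rho2 k a + d * Rsum (Nt S) (fun n => ad a n).
Proof.
  intros HV Hrho2 Hk Ha Hd. apply gk_le; auto. intros gam Rr h b Hadm.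
  pose proof (gk_ge_lagrangian V B rho2 k a gam Rr h b HV Hrho2 Hk Hadm).
  assert (E : lagrangian S V rho1 k a gam Rr h b = lagrangian S V rho2 k a gam Rr h b
            + Rsum (Nt S) (fun n => ad a n * (rho2 n k b - rho1 n k b))).
  { unfold lagrangian.
    rewrite (Rsum_ext _ (fun n => ad a n * (rho1 n k b - gam n))
               (fun n => ad a n * (rho2 n k b - gam n) - ad a n * (rho2 n k b - rho1 n k b)))
      by (intros; ring).
    rewrite Rsum_minus. ring. }
  assert (Rsum (Nt S) (fun n => ad a n * (rho2 n k b - rho1 n k b))
          <= d * Rsum (Nt S) (fun n => ad a n)).
  { rewrite <- Rsum_mult_l. apply Rsum_le. intros n Hn. destruct Hadm as (_ & _ & Hb & _).
    specialize (Hd n b Hn Hb). rewrite Rabs_minus_sym in Hd. apply Rabs_le_bounds in Hd.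
    specialize (Ha n Hn). nra. }
  lra.
Qed.

Lemma gk_dscale V B rho k a c :
  0 < c -> 0 <= V -> table_bounded S B rho -> (k < Kz S)%nat ->
  gk S rmax (c * V) rho k (dscale c a) = c * gk S rmax V rho k a.
Proof.
  intros Hc HV Hrho Hk. assert (HcV : 0 <= c * V) by nra.
  apply Rle_antisym.
  - apply gk_le; auto. intros gam Rr h b Hadm. rewrite lagrangian_dscale.
    apply Rmult_le_compat_l; [lra|]. now apply (gk_ge_lagrangian V B).
  - set (G := gk S rmax (c * V) rho k (dscale c a)).
    assert (HG : gk S rmax V rho k a <= G / c).
    { apply gk_le; auto. intros gam Rr h b Hadm. apply Rle_div_of_mul; auto.
      pose proof (gk_ge_lagrangian (c * V) B rho k (dscale c a) gam Rr h b HcV Hrho Hk Hadm) as Hl.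
      rewrite lagrangian_dscale in Hl. fold G in Hl. lra. }
    apply (Rmult_le_compat_l c) in HG; [|lra].
    replace (c * (G / c)) with G in HG by (field; lra). exact HG.
Qed.

Lemma gk_V_compare V B rho k a :
  0 <= V -> table_bounded S B rho -> (k < Kz S)%nat ->
  gk S rmax V rho k a <= gk S rmax 0 rho k a + V * util_max S rmax /\
  gk S rmax 0 rho k a <= gk S rmax V rho k a + V * cmax.
Proof.
  intros HV Hrho Hk. destruct Hsys as (_ & _ & _ & _ & _ & _ & _ & Hc & _).
  split; apply gk_le; auto; intros gam Rr h b Hadm;
    pose proof Hadm as (Hgam & _ & Hb & _); specialize (Hc k b Hk Hb);
    assert (HU : 0 <= Rsum (Nt S) (fun n => Util S n (gam n)) <= util_max S rmax)
      by (split; [apply Rsum_nonneg | apply Rsum_le]; intros n Hn; apply Util_bounds; auto).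
  - pose proof (gk_ge_lagrangian 0 B rho k a gam Rr h b (Rle_refl 0) Hrho Hk Hadm).
    rewrite lagrangian_split_V. nra.
  - pose proof (gk_ge_lagrangian V B rho k a gam Rr h b HV Hrho Hk Hadm) as HgV.
    rewrite lagrangian_split_V in HgV. nra.
Qed.

Lemma gk0_dzero B rho k : table_bounded S B rho -> (k < Kz S)%nat -> gk S rmax 0 rho k dzero = 0.
Proof.
  intros Hrho Hk. apply Rle_antisym.
  - apply gk_le; auto. intros. rewrite lagrangian0_dzero. lra.
  - destruct (HB k Hk) as [b Hb].
    pose proof (gk_ge_lagrangian 0 B rho k dzero _ _ _ b (Rle_refl 0) Hrho Hk
                  (admissible_zero k b Hk Hb)) as H0.
    now rewrite lagrangian0_dzero in H0.
Qed.

Lemma gdual_dscale V B p rho a c :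
  0 < c -> 0 <= V -> table_bounded S B rho ->
  gdual S rmax (c * V) p rho (dscale c a) = c * gdual S rmax V p rho a.
Proof.
  intros Hc HV Hrho. unfold gdual. rewrite <- Rsum_mult_l. apply Rsum_ext. intros k Hk.
  rewrite (gk_dscale V B) by auto. ring.
Qed.

Lemma gdual_V_compare V B p rho a :
  0 <= V -> table_bounded S B rho -> prob_vec S p ->
  gdual S rmax V p rho a <= gdual S rmax 0 p rho a + V * util_max S rmax /\
  gdual S rmax 0 p rho a <= gdual S rmax V p rho a + V * cmax.
Proof.
  intros HV Hrho [Hp Hp1].
  split; apply Rsum_mean_le; auto; intros k Hk; apply (gk_V_compare V B); auto.
Qed.

Lemma gdual0_dzero B p rho : table_bounded S B rho -> gdual S rmax 0 p rho dzero = 0.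
Proof.
  intros Hrho. unfold gdual. rewrite (Rsum_ext _ _ (fun _ => 0)).
  - rewrite Rsum_const. ring.
  - intros k Hk. rewrite (gk0_dzero B) by auto. ring.
Qed.

Lemma gdual_pi_diff V B p q rho a dz :
  0 <= V -> table_bounded S B rho -> pi_close S p q dz ->
  gdual S rmax V p rho a - gdual S rmax V q rho a
  <= dz * INR (Kz S) * (V * obj_range S rmax cmax
                        + mult_bound S Amax hmax bmax mumax rmax B * dnorm1 S a).
Proof.
  intros HV Hrho Hpq. unfold gdual. rewrite <- Rsum_minus.
  set (X := V * obj_range S rmax cmax + mult_bound S Amax hmax bmax mumax rmax B * dnorm1 S a).
  replace (dz * INR (Kz S) * X) with (Rsum (Kz S) (fun _ => dz * X)) by (rewrite Rsum_const; ring).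
  apply Rsum_le. intros k Hk.
  pose proof (Rabs_gk_le V B rho k a HV Hrho Hk). specialize (Hpq k Hk).
  replace (p k * gk S rmax V rho k a - q k * gk S rmax V rho k a)
    with ((p k - q k) * gk S rmax V rho k a) by ring.
  eapply Rle_trans; [apply Rle_abs|]. rewrite Rabs_mult.
  apply Rmult_le_compat; auto; apply Rabs_pos.
Qed.

Lemma gdual_table_diff V B p rho1 rho2 a d :
  0 <= V -> table_bounded S B rho2 -> prob_vec S p -> feasible S a -> r_close S rho1 rho2 d ->
  gdual S rmax V p rho1 a <= gdual S rmax V p rho2 a + d * Rsum (Nt S) (fun n => ad a n).
Proof.
  intros HV Hrho2 [Hp Hp1] Ha Hd.
  apply Rsum_mean_le; auto. intros k Hk.
  apply (gk_table_diff V B); auto.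
Qed.

(* Joint homogeneity g_V(alpha) = (V / V0) g_{V0}((V0 / V) alpha) transports sharpness. *)
Lemma polyhedral_rescale V V0 B p rho r :
  0 < V -> 0 < V0 -> table_bounded S B rho ->
  polyhedral S (gdual S rmax V0 p rho) r -> polyhedral S (gdual S rmax V p rho) r.
Proof.
  intros HV HV0 Hrho [m0 [Hm0 Hsharp]].
  set (c := V / V0). set (s := V0 / V).
  assert (Hc : 0 < c) by (apply Rdiv_lt_0_compat; auto).
  assert (Hs : 0 < s) by (apply Rdiv_lt_0_compat; auto).
  assert (Hcs : c * s = 1) by (unfold c, s; field; lra).
  replace V with (c * V0) by (unfold c; field; lra).
  exists (dscale c m0). split; [apply feasible_dscale; auto; lra|].
  intros a Ha. rewrite <- (dscale_cancel c s a Hcs) at 1.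
  rewrite !(gdual_dscale V0 B) by (auto; lra).
  specialize (Hsharp (dscale s a) (feasible_dscale S s a (Rlt_le _ _ Hs) Ha)).
  assert (Ed : dnorm S (dscale c m0) a = Rabs c * dnorm S m0 (dscale s a))
    by (apply dnorm_scale_diff; intros; unfold dscale, c, s; simpl; field; lra).
  rewrite Ed, Rabs_pos_eq by lra. apply (Rmult_le_compat_l c) in Hsharp; lra.
Qed.

(* On the ray t * m, sharpness makes g_V grow at rate at least r |m|, while g_V stays within
   V (util_max + cmax) of the positively homogeneous g_0, which grows at rate g_0(m); hence
   r |m| <= g_0(m).  Comparing with the origin gives g_0(m) + r |m| <= V (util_max + cmax). *)
Lemma sharp_minimizer_dnorm_bound V B p rho r m :
  0 <= V -> table_bounded S B rho -> prob_vec S p -> sharp_minimizer S (gdual S rmax V p rho) r m ->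
  2 * r * dnorm S m dzero <= V * obj_range S rmax cmax.
Proof.
  intros HV Hrho Hp [Hm Hsharp].
  set (X := gdual S rmax 0 p rho m). set (Y := dnorm S m dzero).
  assert (Hcmp := fun x => gdual_V_compare V B p rho x HV Hrho Hp).
  assert (Hhom : forall t, 0 < t -> gdual S rmax 0 p rho (dscale t m) = t * X).
  { intros t Ht. unfold X. rewrite <- (gdual_dscale 0 B p rho m t) by (auto; lra).
    now rewrite Rmult_0_r. }
  assert (HXY : X + r * Y <= V * obj_range S rmax cmax).
  { pose proof (Hsharp dzero (feasible_dzero S)) as H0. pose proof (Hcmp dzero) as [Hz _].
    pose proof (Hcmp m) as [_ Hm0]. rewrite (gdual0_dzero B p rho Hrho) in Hz.
    fold X Y in H0, Hm0. unfold obj_range in *. lra. }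
  assert (HYX : r * Y - X <= 0).
  { apply Rle_0_of_linear_bound with (c := V * obj_range S rmax cmax). intros t Ht.
    pose proof (Hsharp (dscale t m) (feasible_dscale S t m ltac:(lra) Hm)) as Hray.
    pose proof (Hcmp (dscale t m)) as [Ht_up _]. pose proof (Hcmp m) as [_ Hm0].
    rewrite Hhom in Ht_up by lra.
    assert (Ed : dnorm S m (dscale t m) = (t - 1) * Y).
    { replace (t - 1) with (Rabs (1 - t)) by (rewrite Rabs_left1; lra).
      apply dnorm_scale_diff; intros; unfold dscale, dzero; simpl; ring. }
    rewrite Ed in Hray. fold X in Hm0. unfold obj_range in *. nra. }
  lra.
Qed.

Lemma uniform_minimizer_bound er ez V0 rho0 V p r m :
  0 < V0 -> 0 < rho0 -> 0 < V ->
  Assumption2 S rmax V0 er ez rho0 -> polyhedral S (gdual S rmax V0 (piz S) (rtrue S)) rho0 ->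
  prob_vec S p -> pi_close S p (piz S) ez -> r_close S r (rtrue S) er ->
  is_minimizer S (gdual S rmax V p r) m ->
  2 * rho0 * dnorm1 S m <= dual_dim S * (V * obj_range S rmax cmax).
Proof.
  intros HV0 Hrho0 HV HA2 Hpoly0 Hp Hpc Hrc Hmin.
  pose proof (table_bounded_of_r_close r er Hrc) as Hr.
  pose proof (polyhedral_rescale V V0 (rmax + er) p r rho0 HV HV0 Hr (HA2 p r Hp Hpc Hrc Hpoly0))
    as Hpoly.
  pose proof (sharp_minimizer_dnorm_bound V (rmax + er) p r rho0 m ltac:(lra) Hr Hp
                (polyhedral_sharp_minimizer S _ rho0 m Hrho0 Hpoly Hmin)).
  pose proof (dnorm1_le S m). pose proof (dual_dim_nonneg S).
  nra.
Qed.

Lemma pi_perturbation V B p q r rho rho0 a b dz :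
  0 <= V -> 0 < rho0 -> table_bounded S B r -> pi_close S p q dz ->
  sharp_minimizer S (gdual S rmax V p r) rho a -> sharp_minimizer S (gdual S rmax V q r) rho b ->
  2 * rho0 * dnorm1 S a <= dual_dim S * (V * obj_range S rmax cmax) ->
  2 * rho0 * dnorm1 S b <= dual_dim S * (V * obj_range S rmax cmax) ->
  rho * dnorm S a b
  <= dz * INR (Kz S) * (V * obj_range S rmax cmax)
     * (1 + mult_bound S Amax hmax bmax mumax rmax B * dual_dim S / (2 * rho0)).
Proof.
  intros HV Hrho0 Hr Hpq Ha Hb Hna Hnb.
  assert (Hqp : pi_close S q p dz) by (intros k Hk; rewrite Rabs_minus_sym; auto).
  pose proof (sharp_minimizers_close S _ _ rho a b Ha Hb).
  pose proof (gdual_pi_diff V B p q r b dz HV Hr Hpq).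
  pose proof (gdual_pi_diff V B q p r a dz HV Hr Hqp).
  set (C := mult_bound S Amax hmax bmax mumax rmax B) in *.
  set (F := V * obj_range S rmax cmax) in *. set (D := dual_dim S) in *.
  pose proof (mult_bound_nonneg B (table_bounded_nonneg B r Hr)) as HC.
  assert (Hsum : C * (dnorm1 S a + dnorm1 S b) <= 2 * F * (C * D / (2 * rho0))).
  { replace (2 * F * (C * D / (2 * rho0))) with (C * (D * F / rho0)) by (field; lra).
    apply Rmult_le_compat_l; auto. apply Rle_div_of_mul; lra. }
  assert (HdzK : 0 <= dz * INR (Kz S))
    by (pose proof (pi_close_nonneg p q dz Hpq); pose proof (pos_INR (Kz S)); nra).
  assert (dz * INR (Kz S) * (C * (dnorm1 S a + dnorm1 S b))
          <= dz * INR (Kz S) * (2 * F * (C * D / (2 * rho0))))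
    by (apply Rmult_le_compat_l; auto).
  unfold obj_range in *. lra.
Qed.

Lemma table_perturbation V B p r1 r2 rho rho0 a b d :
  0 <= V -> 0 < rho0 -> table_bounded S B r1 -> table_bounded S B r2 -> prob_vec S p ->
  r_close S r1 r2 d ->
  sharp_minimizer S (gdual S rmax V p r1) rho a -> sharp_minimizer S (gdual S rmax V p r2) rho b ->
  2 * rho0 * dnorm1 S a <= dual_dim S * (V * obj_range S rmax cmax) ->
  2 * rho0 * dnorm1 S b <= dual_dim S * (V * obj_range S rmax cmax) ->
  rho * dnorm S a b <= d * (V * obj_range S rmax cmax) * (dual_dim S / (2 * rho0)).
Proof.
  intros HV Hrho0 Hr1 Hr2 Hp Hd Ha Hb Hna Hnb.
  assert (Hd' : r_close S r2 r1 d) by (intros n k c Hn Hk Hc; rewrite Rabs_minus_sym; auto).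
  pose proof (r_close_nonneg r1 r2 d Hd) as Hd0.
  pose proof (sharp_minimizers_close S _ _ rho a b Ha Hb).
  destruct Ha as [Fa _], Hb as [Fb _].
  pose proof (gdual_table_diff V B p r1 r2 b d HV Hr2 Hp Fb Hd).
  pose proof (gdual_table_diff V B p r2 r1 a d HV Hr1 Hp Fa Hd').
  set (F := V * obj_range S rmax cmax) in *. set (D := dual_dim S) in *.
  assert (Hsum : Rsum (Nt S) (fun n => ad a n) + Rsum (Nt S) (fun n => ad b n)
                 <= 2 * F * (D / (2 * rho0))).
  { replace (2 * F * (D / (2 * rho0))) with (D * F / rho0) by (field; lra).
    pose proof (Rsum_ad_le_dnorm1 S a Fa). pose proof (Rsum_ad_le_dnorm1 S b Fb).
    apply Rle_div_of_mul; nra. }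
  apply (Rmult_le_compat_l d) in Hsum; auto.
  lra.
Qed.

Lemma perturbation_bounds er ez V0 rho0 V rho ph rh dz dr astar atil ahat :
  0 < V0 -> 0 < rho0 -> 0 < V -> 0 < rho ->
  Assumption2 S rmax V0 er ez rho0 -> polyhedral S (gdual S rmax V0 (piz S) (rtrue S)) rho0 ->
  Assumption2 S rmax V er ez rho -> polyhedral S (gdual S rmax V (piz S) (rtrue S)) rho ->
  prob_vec S ph -> pi_close S ph (piz S) dz -> dz <= ez -> r_close S rh (rtrue S) dr -> dr <= er ->
  is_minimizer S (gdual S rmax V (piz S) (rtrue S)) astar ->
  is_minimizer S (gdual S rmax V (piz S) rh) atil ->
  is_minimizer S (gdual S rmax V ph rh) ahat ->
  let kappa := sharpness_factor S Amax hmax bmax mumax rmax (rmax + er) rho0 in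
  rho * dnorm S ahat atil <= dz * INR (Kz S) * (V * obj_range S rmax cmax) * kappa /\
  rho * dnorm S astar atil <= dr * (V * obj_range S rmax cmax) * kappa.
Proof.
  intros HV0 Hrho0 HV Hrho HA20 Hpoly0 HA2 Hpoly Hph Hpc Hdz Hrc Hdr Hstar Htil Hhat kappa.
  assert (Hpi : prob_vec S (piz S)) by (destruct Hsys as (Hpi0 & Hpi1 & _); split; auto).
  assert (Hpc_pi : pi_close S (piz S) (piz S) ez)
    by (intros k _; rewrite Rminus_diag, Rabs_R0; pose proof (pi_close_nonneg _ _ _ Hpc); lra).
  assert (Hpc_ph : pi_close S ph (piz S) ez) by (intros k Hk; specialize (Hpc k Hk); lra).
  assert (Hrc_true : r_close S (rtrue S) (rtrue S) er)
    by (intros n k b _ _ _; rewrite Rminus_diag, Rabs_R0;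
        pose proof (r_close_nonneg _ _ _ Hrc); lra).
  assert (Hrc_rh : r_close S rh (rtrue S) er)
    by (intros n k b Hn Hk Hb; specialize (Hrc n k b Hn Hk Hb); lra).
  assert (Hrc_sym : r_close S (rtrue S) rh dr)
    by (intros n k b Hn Hk Hb; rewrite Rabs_minus_sym; auto).
  pose proof (table_bounded_of_r_close _ _ Hrc_true) as Hbd_true.
  pose proof (table_bounded_of_r_close _ _ Hrc_rh) as Hbd_rh.
  pose proof (uniform_minimizer_bound er ez V0 rho0 V _ _ _ HV0 Hrho0 HV HA20 Hpoly0
                Hpi Hpc_pi Hrc_true Hstar) as Nstar.
  pose proof (uniform_minimizer_bound er ez V0 rho0 V _ _ _ HV0 Hrho0 HV HA20 Hpoly0
                Hpi Hpc_pi Hrc_rh Htil) as Ntil.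
  pose proof (uniform_minimizer_bound er ez V0 rho0 V _ _ _ HV0 Hrho0 HV HA20 Hpoly0
                Hph Hpc_ph Hrc_rh Hhat) as Nhat.
  pose proof (polyhedral_sharp_minimizer S _ _ _ Hrho Hpoly Hstar) as Sstar.
  pose proof (polyhedral_sharp_minimizer S _ _ _ Hrho (HA2 _ _ Hpi Hpc_pi Hrc_rh Hpoly) Htil)
    as Stil.
  pose proof (polyhedral_sharp_minimizer S _ _ _ Hrho (HA2 _ _ Hph Hpc_ph Hrc_rh Hpoly) Hhat)
    as Shat.
  pose proof (mult_bound_nonneg _ (table_bounded_nonneg _ _ Hbd_rh)) as HC.
  set (C := mult_bound S Amax hmax bmax mumax rmax (rmax + er)) in *.
  set (D := dual_dim S) in *. assert (HD0 : 0 <= D) by apply dual_dim_nonneg.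
  assert (HVF : 0 <= V * obj_range S rmax cmax) by (pose proof obj_range_nonneg; nra).
  assert (HCD : 0 <= C * D / (2 * rho0)) by (apply Rle_div_of_mul; nra).
  assert (HD : 0 <= D / (2 * rho0)) by (apply Rle_div_of_mul; lra).
  assert (Hkappa : kappa = 1 + C * D / (2 * rho0) + D / (2 * rho0))
    by (unfold kappa, sharpness_factor; fold C D; field; lra).
  split.
  - pose proof (pi_perturbation V _ ph (piz S) rh rho rho0 ahat atil dz ltac:(lra) Hrho0 Hbd_rh Hpc
                  Shat Stil Nhat Ntil) as Hbound.
    pose proof (pi_close_nonneg _ _ _ Hpc). pose proof (pos_INR (Kz S)).
    assert (0 <= dz * INR (Kz S) * (V * obj_range S rmax cmax)) by (apply Rmult_le_pos; nra).
    rewrite Hkappa. fold C D in Hbound. nra.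
  - pose proof (table_perturbation V _ (piz S) (rtrue S) rh rho rho0 astar atil dr ltac:(lra) Hrho0
                  Hbd_true Hbd_rh Hpi Hrc_sym Sstar Stil Nstar Ntil) as Hbound.
    pose proof (r_close_nonneg _ _ _ Hrc).
    assert (0 <= dr * (V * obj_range S rmax cmax)) by (apply Rmult_le_pos; nra).
    rewrite Hkappa. fold D in Hbound. nra.
Qed.

Lemma perturbation_estimates er ez V0 rho0 eta V rho ph rh dz dr astar atil ahat :
  0 < V0 -> 0 < rho0 -> 0 < eta ->
  eta <= 2 / sharpness_factor S Amax hmax bmax mumax rmax (rmax + er) rho0 ->
  1 <= V -> 0 < rho ->
  Assumption2 S rmax V0 er ez rho0 -> polyhedral S (gdual S rmax V0 (piz S) (rtrue S)) rho0 ->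
  Assumption2 S rmax V er ez rho -> polyhedral S (gdual S rmax V (piz S) (rtrue S)) rho ->
  prob_vec S ph -> pi_close S ph (piz S) dz -> dz <= ez -> r_close S rh (rtrue S) dr -> dr <= er ->
  is_minimizer S (gdual S rmax V (piz S) (rtrue S)) astar ->
  is_minimizer S (gdual S rmax V (piz S) rh) atil ->
  is_minimizer S (gdual S rmax V ph rh) ahat ->
  let fmax := INR (Nt S) * beta * rmax + cmax in
  let theta := INR (Kz S) * (1 + rmax + Amax + mumax + INR (Nt S) * bmax + hmax) / eta in
  dnorm S ahat atil <= 2 * dz * V * fmax * theta / rho /\
  dnorm S astar atil <= 2 * V * fmax * dr / (rho * eta).
Proof.
  intros HV0 Hrho0 Heta Hek HV Hrho HA20 Hpoly0 HA2 Hpoly Hph Hpc Hdz Hrc Hdr Hstar Htil Hhat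
    fmax theta.
  destruct (perturbation_bounds er ez V0 rho0 V rho ph rh dz dr astar atil ahat
              HV0 Hrho0 ltac:(lra) Hrho HA20 Hpoly0 HA2 Hpoly Hph Hpc Hdz Hrc Hdr Hstar Htil Hhat)
    as [Hpi Hrew].
  pose proof (table_bounded_nonneg _ _ (table_bounded_of_r_close _ _ Hrc)).
  pose proof (sharpness_factor_ge1 (rmax + er) rho0 ltac:(lra) Hrho0).
  set (kappa := sharpness_factor S Amax hmax bmax mumax rmax (rmax + er) rho0) in *.
  pose proof obj_range_nonneg. pose proof util_max_le.
  pose proof system_consts_nonneg as (HAm & Hhm & Hbm & Hmum & Hcm & Hrm).
  pose proof (pos_INR (Nt S)). pose proof (pos_INR (Kz S)).
  pose proof (pi_close_nonneg _ _ _ Hpc). pose proof (r_close_nonneg _ _ _ Hrc).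
  set (D0 := 1 + rmax + Amax + mumax + INR (Nt S) * bmax + hmax) in theta.
  assert (HD0 : 1 <= D0)
    by (unfold D0; assert (0 <= INR (Nt S) * bmax) by (apply Rmult_le_pos; lra); lra).
  assert (Hf : obj_range S rmax cmax <= fmax) by (unfold obj_range, fmax; lra).
  assert (HfD0 : obj_range S rmax cmax <= fmax * D0) by nra.
  split.
  - unfold theta. replace (2 * dz * V * fmax * (INR (Kz S) * D0 / eta) / rho)
      with (2 * ((dz * INR (Kz S) * V) * (fmax * D0)) / (rho * eta)) by (field; lra).
    assert (0 <= dz * INR (Kz S) * V) by (repeat apply Rmult_le_pos; lra).
    apply (Rle_div_of_scaled _ _ _ kappa (dz * INR (Kz S) * (V * obj_range S rmax cmax)) _
             Hrho Heta ltac:(lra) Hek); auto.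
    + apply Rmult_le_pos; nra.
    + rewrite <- Rmult_assoc. apply Rmult_le_compat_l; lra.
  - replace (2 * V * fmax * dr / (rho * eta)) with (2 * ((dr * V) * fmax) / (rho * eta))
      by (field; lra).
    assert (0 <= dr * V) by (apply Rmult_le_pos; lra).
    apply (Rle_div_of_scaled _ _ _ kappa (dr * (V * obj_range S rmax cmax)) _
             Hrho Heta ltac:(lra) Hek); auto.
    + apply Rmult_le_pos; lra.
    + rewrite <- Rmult_assoc. apply Rmult_le_compat_l; lra.
Qed.

End DualFunction.

Theorem lemma3 (S : Sys) (Amax hmax bmax mumax cmax rmax beta : R)
    (Util' : nat -> R -> R) (er ez eta0 : R) :
  system_hyps S Amax hmax bmax mumax cmax rmax beta Util' ->
  0 < er -> 0 < ez -> 0 < eta0 ->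
  Assumption1 S rmax er ez eta0 ->
  exists eta : R, 0 < eta <= eta0 /\
    forall (V rho : R) (ph : nat -> R) (rh : rtab) (dz dr : R)
           (astar atil ahat : dual),
      1 <= V -> 0 < rho ->
      Assumption2 S rmax V er ez rho ->
      polyhedral S (gdual S rmax V (piz S) (rtrue S)) rho ->
      prob_vec S ph ->
      pi_close S ph (piz S) dz -> dz <= ez ->
      r_close S rh (rtrue S) dr -> dr <= er ->
      is_minimizer S (gdual S rmax V (piz S) (rtrue S)) astar ->
      is_minimizer S (gdual S rmax V (piz S) rh) atil ->
      is_minimizer S (gdual S rmax V ph rh) ahat ->
      let fmax := INR (Nt S) * beta * rmax + cmax in
      let theta := INR (Kz S) * (1 + rmax + Amax + mumax + INR (Nt S) * bmax + hmax)
                   / eta in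
      dnorm S ahat atil <= 2 * dz * V * fmax * theta / rho /\
      dnorm S astar atil <= 2 * V * fmax * dr / (rho * eta).
Proof.
  intros Hsys Her Hez Heta0 HA1.
  pose proof (Bset_nonempty_of_Assumption1 Hsys er ez eta0 ltac:(lra) ltac:(lra) HA1) as HB.
  destruct (classic (exists V0 rho0, 0 < V0 /\ 0 < rho0 /\ Assumption2 S rmax V0 er ez rho0 /\
                       polyhedral S (gdual S rmax V0 (piz S) (rtrue S)) rho0))
    as [(V0 & rho0 & HV0 & Hrho0 & HA20 & Hpoly0) | Hnever].
  2: { exists eta0. split; [lra|]. intros V rho ph rh dz dr astar atil ahat HV Hrho HA2 Hpoly.
       exfalso. apply Hnever. exists V, rho. repeat split; auto; lra. }
  set (kappa := sharpness_factor S Amax hmax bmax mumax rmax (rmax + er) rho0).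
  assert (Hkappa : 1 <= kappa).
  { pose proof (system_consts_nonneg Hsys) as (_ & _ & _ & _ & _ & Hrm).
    apply (sharpness_factor_ge1 Hsys); lra. }
  assert (Heta : 0 < Rmin eta0 (2 / kappa)) by (apply Rmin_pos; [|apply Rdiv_lt_0_compat]; lra).
  exists (Rmin eta0 (2 / kappa)). split; [split; [exact Heta | apply Rmin_l]|].
  intros V rho ph rh dz dr astar atil ahat HV Hrho.
  exact (perturbation_estimates Hsys HB er ez V0 rho0 _ V rho ph rh dz dr astar atil ahat
           HV0 Hrho0 Heta (Rmin_r _ _) HV Hrho HA20 Hpoly0).
Qed.
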